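(* Let $A$ be an associative $F$-algebra graded by $\mathbb Z^n$, equipped with a bicharacter $p$ on homogeneous elements (so $p_{uu',v}=p_{u,v}p_{u',v}$ and $p_{u,vv'}=p_{u,v}p_{u,v'}$). Let $u_1,\dots,u_m\in A$ be homogeneous elements such that for all $1\le i,j\le m$, $u_iu_j=p_{u_i,u_j}u_ju_i$ with $p_{u_i,u_j}\in F^*$, $p_{u_i,u_j}p_{u_j,u_i}=1$, and $p_{u_i,u_j}=1$ whenever $u_i=u_j$. Then $$[u_1,\dots,u_m]_R=\prod_{j=1}^{m-1}p_{u_m\cdots u_{j+1},\,u_j}\bigl(p_{u_j,\,u_m\cdots u_{j+1}}^{3}-1\bigr)\,u_m\cdots u_2u_1,$$ where $[u_1,\dots,u_m]_R:=[u_1,[u_2,\cdots[u_{m-1},u_m]_R\cdots]_R]_R$.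
   Context: For homogeneous $u,v$, $[u,v]_R=p_{u,v}uv-p_{v,u}vu$, extended bilinearly. Typical instance: $A=\mathfrak B(V)$ for a braided vector space of diagonal type with matrix $(p_{i,j})$, graded by $\deg x_i=e_i$, with $p_{u,v}=\prod_{i,j}p_{i,j}^{a_ib_j}$ for $\deg u=\sum a_ie_i$, $\deg v=\sum b_je_j$. *)

From HB Require Import structures.
From mathcomp Require Import all_boot all_order all_algebra.
Set Implicit Arguments. Unset Strict Implicit. Unset Printing Implicit Defensive.
Import Order.TTheory GRing.Theory Num.Theory.
Local Open Scope ring_scope.

Definition is_Zn_grading (F : fieldType) (A : algType F) (n : nat)
    (G : 'rV[int]_n -> {pred A}) : Prop :=
  [/\ (forall d, 0 \in G d),
      (forall d (a b : A), a \in G d -> b \in G d -> a + b \in G d),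
      (forall d (c : F) (a : A), a \in G d -> c *: a \in G d),
      (forall d e (a b : A), a \in G d -> b \in G e -> a * b \in G (d + e))
    & (1 \in G 0)] /\
  ((forall a : A, exists (s : seq 'rV[int]_n) (f : 'rV[int]_n -> A),
          uniq s /\ (forall d, f d \in G d) /\ a = \sum_(d <- s) f d) /\
     (forall (s : seq 'rV[int]_n) (f : 'rV[int]_n -> A),
          uniq s -> (forall d, f d \in G d) -> \sum_(d <- s) f d = 0 ->
          forall d, d \in s -> f d = 0)).

Definition is_bichar (F : fieldType) (n : nat) (p : 'rV[int]_n -> 'rV[int]_n -> F) : Prop :=
  (forall a a' b, p (a + a') b = p a b * p a' b) /\
  (forall a b b', p a (b + b') = p a b * p a b').

(* braided commutator [x,y]_R = p_{x,y} xy - p_{y,x} yx, for x of degree a, y of degree b *)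
Definition brR (F : fieldType) (A : algType F) (n : nat)
    (p : 'rV[int]_n -> 'rV[int]_n -> F) (a b : 'rV[int]_n) (x y : A) : A :=
  p a b *: (x * y) - p b a *: (y * x).

(* degree of u_{i} ... u_{i+k} : sum of d j for i <= j <= i+k *)
Definition degsum (n : nat) (d : nat -> 'rV[int]_n) (i j : nat) : 'rV[int]_n :=
  \sum_(i <= k < j.+1) d k.

(* rnest k i = [u_i, [u_{i+1}, ... [u_{i+k-1}, u_{i+k}]_R ...]_R]_R *)
Fixpoint rnest (F : fieldType) (A : algType F) (n : nat)
    (p : 'rV[int]_n -> 'rV[int]_n -> F) (d : nat -> 'rV[int]_n) (u : nat -> A)
    (k i : nat) : A :=
  match k with
  | 0 => u i
  | k'.+1 => brR p (d i) (degsum d i.+1 (i + k)) (u i) (rnest p d u k' i.+1)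
  end.

Definition rbracket (F : fieldType) (A : algType F) (n : nat)
    (p : 'rV[int]_n -> 'rV[int]_n -> F) (d : nat -> 'rV[int]_n) (u : nat -> A)
    (m : nat) : A := rnest p d u m.-1 1.

From HB Require Import structures.
From mathcomp Require Import all_boot all_order all_algebra.
From mathcomp Require Import zify ring.
Set Implicit Arguments. Unset Strict Implicit. Unset Printing Implicit Defensive.
Import Order.TTheory GRing.Theory Num.Theory.
Local Open Scope ring_scope.

(* Write
   W = u_m ... u_(j+1) and D for its degree.  By the bicharacter property,
   u_j W = a W u_j with a = p_(u_j, D), and b = p_(D, u_j) = a^-1, so
   [u_j, W]_R = (a a - b) W u_j = b (a^3 - 1) W u_j. *)

Lemma sqrrB_recip (R : comPzRingType) (a b : R) :
  a * b = 1 -> a ^+ 2 - b = b * (a ^+ 3 - 1).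
Proof.
move=> ab; have -> : b * (a ^+ 3 - 1) = a ^+ 2 * (a * b) - b by ring.
by rewrite ab mulr1.
Qed.

Lemma qcomm_prodr (R : comPzRingType) (A : algType R) (I : eqType)
    (x : A) (s : seq I) (y : I -> A) (c : I -> R) :
  {in s, forall l, x * y l = c l *: (y l * x)} ->
  x * \prod_(l <- s) y l = (\prod_(l <- s) c l) *: (\prod_(l <- s) y l * x).
Proof.
elim: s => [|a s IH] qc; first by rewrite !big_nil mul1r mulr1 scale1r.
have /IH {}IH : {in s, forall l, x * y l = c l *: (y l * x)}.
  by move=> l sl; apply: qc; rewrite inE sl orbT.
rewrite !big_cons mulrA qc ?mem_head // -scalerAl -[y a * x * _]mulrA IH.
by rewrite -scalerAr scalerA mulrA.
Qed.

Section Bicharacter.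
Variables (F : fieldType) (n : nat) (p : 'rV[int]_n -> 'rV[int]_n -> F).
Hypothesis p_bichar : is_bichar p.

Lemma bichar_r0 a b : p a b != 0 -> p a 0 = 1.
Proof.
move=> nz; apply: (mulfI nz); rewrite mulr1 -(proj2 p_bichar).
by rewrite addr0.
Qed.

Lemma bichar_0l a b : p a b != 0 -> p 0 b = 1.
Proof.
move=> nz; apply: (mulfI nz); rewrite mulr1 -(proj1 p_bichar).
by rewrite addr0.
Qed.

Lemma bichar_sumr (I : Type) (s : seq I) (e : I -> 'rV[int]_n) a :
  p a 0 = 1 -> p a (\sum_(k <- s) e k) = \prod_(k <- s) p a (e k).
Proof.
move=> pa0; elim: s => [|k s IH]; first by rewrite !big_nil.
by rewrite !big_cons (proj2 p_bichar) IH.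
Qed.

Lemma bichar_suml (I : Type) (s : seq I) (e : I -> 'rV[int]_n) b :
  p 0 b = 1 -> p (\sum_(k <- s) e k) b = \prod_(k <- s) p (e k) b.
Proof.
move=> p0b; elim: s => [|k s IH]; first by rewrite !big_nil.
by rewrite !big_cons (proj1 p_bichar) IH.
Qed.

Lemma brR_scaler (A : algType F) a b (x y : A) (k : F) :
  brR p a b x (k *: y) = k *: brR p a b x y.
Proof.
rewrite /brR -scalerAr -scalerAl scalerBr !scalerA.
by rewrite [k * p a b]mulrC [k * p b a]mulrC.
Qed.

Lemma brR_qcomm (A : algType F) a b (x y : A) (c : F) :
  x * y = c *: (y * x) -> brR p a b x y = (p a b * c - p b a) *: (y * x).
Proof. by move=> xy; rewrite /brR xy scalerA scalerBl. Qed.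

End Bicharacter.

Section NestedBracket.
Variables (F : fieldType) (A : algType F) (n : nat).
Variables (p : 'rV[int]_n -> 'rV[int]_n -> F) (d : nat -> 'rV[int]_n).
Variables (u : nat -> A) (m : nat).
Hypothesis p_bichar : is_bichar p.
Hypothesis u_qcomm : forall i j, (1 <= i <= m)%N -> (1 <= j <= m)%N ->
  u i * u j = p (d i) (d j) *: (u j * u i).
Hypothesis p_skew : forall i j, (1 <= i <= m)%N -> (1 <= j <= m)%N ->
  p (d i) (d j) * p (d j) (d i) = 1.

Local Notation word i := (\prod_(l <- rev (index_iota i m.+1)) u l).

Lemma p_neq0 i j : (1 <= i <= m)%N -> (1 <= j <= m)%N -> p (d i) (d j) != 0.
Proof.
move=> hi hj; apply/eqP => p0; have := p_skew hi hj.
by rewrite p0 mul0r => /eqP; rewrite eq_sym oner_eq0.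
Qed.

Lemma p_degsumr i j : (1 <= i <= m)%N ->
  p (d i) (degsum d j m) = \prod_(j <= k < m.+1) p (d i) (d k).
Proof. by move=> hi; rewrite bichar_sumr // (bichar_r0 p_bichar (p_neq0 hi hi)). Qed.

Lemma p_degsuml i j : (1 <= i <= m)%N ->
  p (degsum d j m) (d i) = \prod_(j <= k < m.+1) p (d k) (d i).
Proof. by move=> hi; rewrite bichar_suml // (bichar_0l p_bichar (p_neq0 hi hi)). Qed.

Lemma p_degsum_skew i : (1 <= i <= m)%N ->
  p (d i) (degsum d i.+1 m) * p (degsum d i.+1 m) (d i) = 1.
Proof.
move=> hi; rewrite p_degsumr // p_degsuml // -big_split big1_seq //= => k.
by rewrite mem_index_iota => ikm; apply: p_skew; lia.
Qed.

Lemma u_qcomm_word i : (1 <= i <= m)%N ->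
  u i * word i.+1 = p (d i) (degsum d i.+1 m) *: (word i.+1 * u i).
Proof.
move=> hi; rewrite (qcomm_prodr (c := fun k => p (d i) (d k))).
  by rewrite big_rev p_degsumr.
by move=> k; rewrite mem_rev mem_index_iota => ikm; apply: u_qcomm; lia.
Qed.

Lemma word_cons i : (i <= m)%N -> word i = word i.+1 * u i.
Proof.
by move=> im; rewrite /index_iota subSn // rev_cons -cats1 big_cat big_seq1.
Qed.

Lemma rnestE k i : (0 < i)%N -> (i + k = m)%N ->
  rnest p d u k i =
    (\prod_(i <= j < m)
        (p (degsum d j.+1 m) (d j) * (p (d j) (degsum d j.+1 m) ^+ 3 - 1)))
      *: word i.
Proof.
elim: k i => [|k IH] i i_gt0 /=.
  rewrite addn0 => <-; rewrite big_geq // scale1r /index_iota subSnn.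
  by rewrite big_seq1.
move=> ikm; have im : (1 <= i <= m)%N by lia.
rewrite ikm (IH i.+1) //; last by rewrite addSnnS.
rewrite brR_scaler (brR_qcomm _ _ _ (u_qcomm_word im)) -word_cons; last by lia.
rewrite (big_ltn (_ : i < m)%N); last by lia.
rewrite scalerA -expr2 (sqrrB_recip (p_degsum_skew im)).
by rewrite mulrC.
Qed.

End NestedBracket.

Theorem lemma3p3 (F : fieldType) (A : algType F) (n : nat)
    (G : 'rV[int]_n -> {pred A}) (p : 'rV[int]_n -> 'rV[int]_n -> F)
    (m : nat) (u : nat -> A) (d : nat -> 'rV[int]_n) :
  is_Zn_grading G ->
  is_bichar p ->
  (1 <= m)%N ->
  (forall i, (1 <= i <= m)%N -> u i \in G (d i)) ->
  (forall i j, (1 <= i <= m)%N -> (1 <= j <= m)%N ->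
     [/\ u i * u j = p (d i) (d j) *: (u j * u i),
         p (d i) (d j) != 0,
         p (d i) (d j) * p (d j) (d i) = 1
       & u i = u j -> p (d i) (d j) = 1]) ->
  rbracket p d u m =
    (\prod_(1 <= j < m)
        (p (degsum d j.+1 m) (d j) * (p (d j) (degsum d j.+1 m) ^+ 3 - 1)))
      *: \prod_(i <- rev (iota 1 m)) u i.
Proof.
move=> _ p_bichar m_gt0 _ hyp.
have u_qcomm i j : (1 <= i <= m)%N -> (1 <= j <= m)%N ->
     u i * u j = p (d i) (d j) *: (u j * u i).
  by move=> hi hj; case: (hyp i j hi hj).
have p_skew i j : (1 <= i <= m)%N -> (1 <= j <= m)%N ->
     p (d i) (d j) * p (d j) (d i) = 1.
  by move=> hi hj; case: (hyp i j hi hj).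
rewrite /rbracket (rnestE p_bichar u_qcomm p_skew) //; last by lia.
by congr (_ *: _); rewrite /index_iota subSS subn0.
Qed.
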